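(* Let $n\ge 2$ be an integer and let $$ P(x)=x^{2n}+ d_{2n-1} x^{2n-1}+\dots + d_1 x +1 $$ with real coefficients $d_i$ satisfying $d_{2n-i}=d_i$ for $i=1,\dots,2n-1$ and $|d_i|<1/(2n-2)$ for all $i$. Then all roots of $P$ lie on the unit circle. *)

From HB Require Import structures.
From mathcomp Require Import all_boot all_order all_algebra.
From mathcomp Require Export complex.
Set Implicit Arguments. Unset Strict Implicit. Unset Printing Implicit Defensive.
Import Order.TTheory GRing.Theory Num.Theory.
Local Open Scope ring_scope.

Definition Ppoly (R : rcfType) (n : nat) (d : nat -> R) : {poly R} :=
  'X^(2 * n) + \sum_(1 <= i < 2 * n) (d i)%:P * 'X^i + 1.

From HB Require Import structures.
From mathcomp Require Import all_boot all_order all_algebra complex.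
From mathcomp Require Import ring zify.
Import Order.TTheory GRing.Theory Num.Theory.
Local Open Scope ring_scope.

(* Let N = 2n and, for deg q <= N, q^*(x) = x^N conj(q(1/conj x)). As P is palindromic with
   real coefficients, P = Q + Q^*, where Q keeps the coefficients of P of degree > n and half
   of the middle one. Q is monic and its lower coefficients have moduli summing to less than
   n/(2n-2) <= 1, so all roots z_k of Q lie in the open unit disk. Then Q(x) = prod (x - z_k)
   and Q^*(x) = prod (1 - x conj z_k), and |x - z| < |1 - x conj z| when |x| < 1, with the
   reverse inequality when |x| > 1 (the difference of their squares is
   (1 - |x|^2)(1 - |z|^2)). So |Q(x)| <> |Q^*(x)| off the unit circle, where P cannot vanish. *)

Lemma monic_root_norm_lt1 (R : numDomainType) (p : {poly R}) (z : R) :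
  p \is monic -> \sum_(i < (size p).-1) `|p`_i| < 1 -> root p z -> `|z| < 1.
Proof.
move=> /monicP p_monic sum_lt1 /rootP pz0.
have size_p : size p = (size p).-1.+1.
  by rewrite prednK // lt0n size_poly_eq0 -lead_coef_eq0 p_monic oner_eq0.
set N := (size p).-1 in sum_lt1 size_p *.
rewrite real_ltNge ?normr_real ?real1 //; apply/negP => z_ge1.
have zN_gt0 : 0 < `|z| ^+ N by rewrite exprn_gt0 // (lt_le_trans ltr01).
have lead_term : z ^+ N = - \sum_(i < N) p`_i * z ^+ i.
  move: pz0; rewrite horner_coef size_p big_ord_recr /=.
  rewrite -[p`_N]/(lead_coef p) p_monic mul1r addrC => /eqP.
  by rewrite addr_eq0 => /eqP.
suff : `|z| ^+ N < `|z| ^+ N by rewrite ltxx.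
rewrite -{1}normrX lead_term normrN.
apply: (le_lt_trans (ler_norm_sum _ _ _)).
apply: (@le_lt_trans _ _ ((\sum_(i < N) `|p`_i|) * `|z| ^+ N)); last first.
  by rewrite gtr_pMl.
rewrite mulr_suml; apply: ler_sum => i _.
by rewrite normrM normrX ler_wpM2l // ler_weXn2l // ltnW.
Qed.

Section ConjReverse.
Context {C : numClosedFieldType}.
Implicit Types (p q : {poly C}) (x z : C).

Definition conj_rev (N : nat) p : {poly C} := \poly_(i < N.+1) (p`_(N - i))^*.

Lemma horner_conj_rev N p x : (size p <= N.+1)%N -> x != 0 ->
  (conj_rev N p).[x] = x ^+ N * (p.[x^*^-1])^*.
Proof.
move=> size_p x_neq0.
rewrite horner_poly (horner_coef_wide _ size_p) rmorph_sum mulr_sumr.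
rewrite (reindex_inj rev_ord_inj) /=; apply: eq_bigr => i _.
have le_iN : (i <= N)%N by rewrite -ltnS.
rewrite subSS subKn // rmorphM rmorphXn /= fmorphV /= conjCK mulrCA; congr (_ * _).
have -> : x ^+ N = x ^+ (N - i) * x ^+ i by rewrite -exprD subnK.
by rewrite exprVn mulfK // expf_neq0.
Qed.

Lemma horner_conj_rev_prod (r : seq C) x :
  (conj_rev (size r) (\prod_(z <- r) ('X - z%:P))).[x] = \prod_(z <- r) (1 - x * z^*).
Proof.
have [->|x_neq0] := eqVneq x 0.
  have /monicP := monic_prod_XsubC r xpredT id; rewrite lead_coefE size_prod_XsubC /=.
  rewrite horner_coef0 coef_poly subn0 => ->.
  by rewrite conjC1 big1 // => z _; rewrite mul0r subr0.
rewrite horner_conj_rev ?size_prod_XsubC // horner_prod rmorph_prod.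
elim: r => [|a r IHr]; first by rewrite !big_nil mulr1.
rewrite !big_cons /= exprS mulrACA IHr hornerXsubC rmorphB fmorphV /= conjCK.
by rewrite mulrBr divff.
Qed.

Lemma conj_rev_split {N p} {w : nat -> C} :
  (size p <= N.+1)%N -> conj_rev N p = p ->
  (forall i, w i \is Num.real) -> (forall i, (i <= N)%N -> w i + w (N - i)%N = 1) ->
  let q := \poly_(i < N.+1) (w i * p`_i) in p = q + conj_rev N q.
Proof.
move=> size_p p_selfrec w_real w_sym q; apply/polyP => i.
rewrite coefD !coef_poly.
have [lt_iN|ge_iN] := ltnP i N.+1; last by rewrite addr0 nth_default // (leq_trans size_p).
have le_iN : (i <= N)%N by rewrite -ltnS.
rewrite ltnS leq_subr rmorphM /= conj_Creal //.
have -> : (p`_(N - i))^* = p`_i.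
  by rewrite -[in RHS]p_selfrec coef_poly lt_iN.
by rewrite -mulrDl w_sym // mul1r.
Qed.

Lemma blaschke_sqr_norm_gap x z :
  `|1 - x * z^*| ^+ 2 - `|x - z| ^+ 2 = (1 - `|x| ^+ 2) * (1 - `|z| ^+ 2).
Proof. by rewrite !normCK !rmorphB rmorphM rmorph1 /= conjCK; ring. Qed.

Lemma blaschke_norm_lt x z : `|z| < 1 -> `|x| < 1 -> `|x - z| < `|1 - x * z^*|.
Proof.
move=> z_lt1 x_lt1; rewrite -ltr_sqr ?nnegrE // -subr_gt0 blaschke_sqr_norm_gap.
by rewrite mulr_gt0 // subr_gt0 exprn_ilt1.
Qed.

Lemma blaschke_norm_gt x z : `|z| < 1 -> 1 < `|x| -> `|1 - x * z^*| < `|x - z|.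
Proof.
move=> z_lt1 x_gt1; rewrite -ltr_sqr ?nnegrE // -subr_lt0 blaschke_sqr_norm_gap.
by rewrite nmulr_rlt0 ?subr_gt0 ?exprn_ilt1 // subr_lt0 exprn_egt1.
Qed.

Lemma root_add_conj_rev_norm1 N q z : (0 < N)%N -> q \is monic -> size q = N.+1 ->
  (forall w, root q w -> `|w| < 1) -> root (q + conj_rev N q) z -> `|z| = 1.
Proof.
move=> N_gt0 /monicP q_monic size_q q_roots.
have [r q_prod] := closed_field_poly_normal q.
rewrite q_monic scale1r in q_prod.
have size_r : size r = N by move: size_q; rewrite q_prod size_prod_XsubC => -[].
have r_in_disk w : w \in r -> `|w| < 1.
  by move=> wr; apply: q_roots; rewrite q_prod root_prod_XsubC.
have r_has : has (mem r) r by apply/hasP; exists r`_0 => //; apply: mem_nth; rewrite size_r.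
have norm_prod_lt (E1 E2 : C -> C) : (forall w, w \in r -> `|E1 w| < `|E2 w|) ->
    `|\prod_(w <- r) E1 w| < `|\prod_(w <- r) E2 w|.
  move=> E12; rewrite !normr_prod !big_seq; apply: ltr_prod => // w wr.
  by rewrite normr_ge0 E12.
move=> /rootP; rewrite hornerE -size_r q_prod horner_conj_rev_prod horner_prod.
under eq_bigr do rewrite hornerXsubC.
move/eqP; rewrite addr_eq0 => /eqP sum0.
have [z_lt1|z_gt1|//] := real_ltgtP (normr_real z) (real1 C).
- have := norm_prod_lt _ _ (fun w wr => blaschke_norm_lt z w (r_in_disk w wr) z_lt1).
  by rewrite sum0 normrN ltxx.
- have := norm_prod_lt _ _ (fun w wr => blaschke_norm_gt z w (r_in_disk w wr) z_gt1).
  by rewrite sum0 normrN ltxx.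
Qed.

End ConjReverse.

Lemma PpolyE (R : rcfType) (n : nat) (d : nat -> R) : (0 < n)%N ->
  Ppoly n d = \poly_(i < (2 * n).+1) (if (i == 0)%N || (i == 2 * n)%N then 1 else d i).
Proof.
move=> n_gt0; apply/polyP => i.
rewrite coef_poly !coefD coefXn coef1 coef_sum.
under eq_bigr do rewrite coefCM coefXn mulr_natr mulrb eq_sym.
rewrite -big_mkcond big_nat1_eq.
have N_neq0 : (2 * n)%N != 0%N by lia.
have [->|i_neq0] := eqVneq i 0%N; first by rewrite /= eq_sym (negbTE N_neq0) !add0r.
have [->|i_neqN] := eqVneq i (2 * n)%N; first by rewrite /= ltnn andbF ltnSn !addr0.
by rewrite /= add0r addr0 lt0n i_neq0 ltnS ltn_neqAle i_neqN.
Qed.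

Definition upper_weight {F : numFieldType} (n i : nat) : F :=
  if (n < i)%N then 1 else if i == n then 2^-1 else 0.

Lemma upper_weight_real {F : numFieldType} (n i : nat) : (upper_weight n i : F) \is Num.real.
Proof.
rewrite /upper_weight; case: ifP => _; [exact: real1 | case: ifP => _; last exact: real0].
by rewrite rpredV realn.
Qed.

Lemma upper_weight_sym {F : numFieldType} (n i : nat) : (i <= 2 * n)%N ->
  upper_weight n i + upper_weight n (2 * n - i) = 1 :> F.
Proof.
move=> le_i2n; rewrite /upper_weight.
case: (ltngtP n i) => [lt_ni|lt_in|<-].
- have -> : (n < 2 * n - i)%N = false by lia.
  have -> : (2 * n - i == n)%N = false by lia.
  by rewrite addr0.
- have -> : (n < 2 * n - i)%N by lia.
  by rewrite add0r.
- by rewrite mul2n -addnn addnK ltnn eqxx -mulr2n -[_ *+ 2]mulr_natr mulVf ?pnatr_eq0.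
Qed.

Lemma upper_weight_top {F : numFieldType} (n : nat) : (0 < n)%N ->
  upper_weight n (2 * n) = 1 :> F.
Proof. by move=> n_gt0; rewrite /upper_weight ltn_Pmull. Qed.

Lemma norm_upper_weight_le1 {F : numFieldType} (n i : nat) : `|upper_weight n i : F| <= 1.
Proof.
rewrite /upper_weight; case: ifP => _; first by rewrite normr1.
case: ifP => _; last by rewrite normr0.
by rewrite normfV ger0_norm // invf_le1 ?ler1n ?ltr0n.
Qed.

Lemma norm_real_complex (R : rcfType) (r : R) : `|r%:C%C| = `|r|%:C%C.
Proof. by rewrite normc_def /= expr0n addr0 sqrtr_sqr. Qed.

Section PalindromicPpoly.
Context {R : rcfType} {n : nat} {d : nat -> R}.
Hypothesis n_ge2 : (2 <= n)%N.
Hypothesis d_sym : forall i : nat, (1 <= i <= 2 * n - 1)%N -> d (2 * n - i)%N = d i.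
Hypothesis d_small : forall i : nat, (1 <= i <= 2 * n - 1)%N -> `|d i| < 1 / (2 * n - 2)%:R.

Local Notation N := (2 * n)%N.
Local Notation p := (map_poly (real_complex R) (Ppoly n d)).

Lemma coef_Ppoly_complex i :
  p`_i = if (i <= N)%N then (if (i == 0)%N || (i == N) then 1 else d i)%:C%C else 0.
Proof. by rewrite coef_map PpolyE ?(ltnW n_ge2) // coef_poly ltnS; case: ifP. Qed.

Lemma size_Ppoly_complex : (size p <= N.+1)%N.
Proof. by rewrite size_map_poly PpolyE ?(ltnW n_ge2) // size_poly. Qed.

Lemma conj_rev_Ppoly : conj_rev N p = p.
Proof.
apply/polyP => i; rewrite coef_poly !coef_Ppoly_complex ltnS leq_subr.
case: leqP => [le_iN|//].
rewrite conj_Creal ?complex_real //; congr (_%:C%C).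
have [->|i_neq0] := eqVneq i 0%N; first by rewrite subn0 eqxx orbT.
have [->|i_neqN] := eqVneq i N; first by rewrite subnn eqxx.
have -> : (N - i == 0)%N = false by lia.
have -> : (N - i == N)%N = false by lia.
by rewrite d_sym //; lia.
Qed.

Local Notation upper_half := (\poly_(i < N.+1) (upper_weight n i * p`_i)).

Lemma upper_half_lead_coef : upper_weight n N * p`_N = 1.
Proof.
by rewrite upper_weight_top ?(ltnW n_ge2) // coef_Ppoly_complex leqnn eqxx orbT mul1r.
Qed.

Lemma upper_half_monic : upper_half \is monic.
Proof.
by apply/monicP; rewrite lead_coef_poly //= upper_half_lead_coef // oner_eq0.
Qed.

Lemma size_upper_half : size upper_half = N.+1.
Proof. by rewrite size_poly_eq //= upper_half_lead_coef oner_eq0. Qed.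

Lemma upper_half_norm_sum_lt1 : \sum_(i < (size upper_half).-1) `|upper_half`_i| < 1.
Proof.
set c : R[i] := (N - 2)%:R^-1.
have coef_lt i : (n <= i < N)%N -> `|upper_half`_i| < c.
  move=> /andP[le_ni lt_iN].
  rewrite coef_poly ltnS (ltnW lt_iN) coef_Ppoly_complex (ltnW lt_iN).
  have -> : ((i == 0)%N || (i == N)) = false by lia.
  rewrite normrM (le_lt_trans (ler_piMl _ (norm_upper_weight_le1 _ _))) //.
  have -> : c = (1 / (N - 2)%:R)%:C%C by rewrite mul1r fmorphV rmorph_nat.
  by rewrite norm_real_complex ltcR d_small //; lia.
rewrite size_upper_half /= -(big_mkord xpredT (fun i => `|upper_half`_i|)).
rewrite (big_cat_nat (n := n)) /=; [|lia|lia].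
rewrite big_nat big1 ?add0r => [|i /andP[_ lt_in]]; last first.
  rewrite coef_poly /upper_weight.
  have -> : (n < i)%N = false by lia.
  have -> : (i == n) = false by lia.
  by rewrite mul0r if_same normr0.
apply: (lt_le_trans (ltr_sum_nat _ coef_lt)); first lia.
rewrite sumr_const_nat.
have -> : (N - n = n)%N by lia.
rewrite -mulr_natl ler_pdivrMr ?ltr0n ?mul1r ?ler_nat; lia.
Qed.

End PalindromicPpoly.

Theorem lemma3 (R : rcfType) (n : nat) (d : nat -> R)
  (hn : (2 <= n)%N)
  (hsym : forall i : nat, (1 <= i <= 2 * n - 1)%N -> d (2 * n - i)%N = d i)
  (hbound : forall i : nat, (1 <= i <= 2 * n - 1)%N -> `|d i| < 1 / (2 * n - 2)%:R)
  (z : R[i]) :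
  root (map_poly (real_complex R) (Ppoly n d)) z -> `|z| = 1.
Proof.
rewrite (conj_rev_split (size_Ppoly_complex hn) (conj_rev_Ppoly hn hsym)
  (upper_weight_real n) (upper_weight_sym n)).
apply: root_add_conj_rev_norm1.
- by rewrite muln_gt0 (ltnW hn).
- exact: upper_half_monic hn.
- exact: size_upper_half hn.
- move=> w.
  exact: monic_root_norm_lt1 (upper_half_monic hn) (upper_half_norm_sum_lt1 hn hbound).
Qed.
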